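(* For all $\vec v\in\hat N^n,\vec w\in\hat N^m$ with $n,m\ge1$, writing $\vec v=\vec v_l\vee\vec v_r$ and $\vec w=\vec w_l\vee\vec w_r$, the set $I=\{\vec u\in\hat N^{n+m}:\vec v\nearrow\vec w\le\vec u\le\vec v\nwarrow\vec w\}$ is the disjoint union of $I_1=\{\vec u:\ \vec v_l\vee(\vec v_r\nearrow\vec w)\le\vec u\le\vec v\nwarrow\vec w\}$ and $I_2=\{\vec u:\ \vec v\nearrow\vec w\le\vec u\le(\vec v\nwarrow\vec w_l)\vee\vec w_r\}$. Equivalently, $\vec v\star\vec w=\vec v_l\vee(\vec v_r\star\vec w)+(\vec v\star\vec w_l)\vee\vec w_r$, where $\vee$ is extended bilinearly, and $I_1$ (resp. $I_2$) is the set of trees appearing in the first (resp. second) summand.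
   Context: $\hat N^0=\{()\}$ (empty vector) and, for $n\ge1$, $\hat N^n$ is the set of names of planar rooted binary trees with $n$ internal vertices; every element of $\hat N^n$, $n\ge1$, is uniquely $\vec v_l\vee\vec v_r:=(\vec v_l,1,p+1+\vec v_r)$ with $\vec v_l\in\hat N^p,\vec v_r\in\hat N^q$, $p+q+1=n$, where $k+(w_1,\dots,w_q)=(w_1+k,\dots,w_q+k)$ (so $\vec v\vee()=(\vec v,1)$, $()\vee\vec v=(1,1+\vec v)$, $()\vee()=(1)$). For $\vec v\in\hat N^n,\vec w\in\hat N^m$: $\vec v\nearrow\vec w=(\vec v,n\triangleright w_1,\dots,n\triangleright w_m)$ with $n\triangleright a=a+n$ for $a\neq1$, $n\triangleright1=1$; $\vec v\nwarrow\vec w=(\vec v,n+\vec w)$; $()$ is a unit for both. Componentwise order $\le$. On $K\hat N^\infty_*=\bigoplus_{n\ge1}K\hat N^n$ ($K$ a field of characteristic zero), $\vec v\star\vec w$ is the sum of all $\vec t\in\hat N^{n+m}$ with $\vec v\nearrow\vec w\le\vec t\le\vec v\nwarrow\vec w$, and $()\star\vec v=\vec v\star()=\vec v$. *)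

From mathcomp Require Import all_boot.
Set Implicit Arguments. Unset Strict Implicit. Unset Printing Implicit Defensive.

Inductive tree := Leaf | Node of tree & tree.

Fixpoint internal (t : tree) : nat :=
  match t with Leaf => 0 | Node l r => (internal l + internal r).+1 end.

Definition shift (k : nat) (w : seq nat) : seq nat := map (fun a => a + k) w.

Definition vjoin (vl vr : seq nat) : seq nat := vl ++ 1 :: shift (size vl).+1 vr.

Fixpoint name (t : tree) : seq nat :=
  match t with Leaf => [::] | Node l r => vjoin (name l) (name r) end.

Definition Nhat (n : nat) (u : seq nat) : Prop :=
  exists t : tree, internal t = n /\ name t = u.

Definition tri (n a : nat) : nat := if a == 1 then 1 else a + n.

Definition nearrow (v w : seq nat) : seq nat := v ++ map (tri (size v)) w.
Definition nwarrow (v w : seq nat) : seq nat := v ++ shift (size v) w.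

Definition vle (u v : seq nat) : bool := (size u == size v) && all2 leq u v.

Definition tinterval (k : nat) (a b : seq nat) (u : seq nat) : Prop :=
  Nhat k u /\ vle a u /\ vle u b.

From mathcomp Require Import all_boot zify.
Set Implicit Arguments. Unset Strict Implicit. Unset Printing Implicit Defensive.

(* Both bounds of I end with the name of w_r shifted past position n + |w_l|,
   preceded by a separator entry equal to 1 in v ↗ w and to n + 1 in v ↖ w.
   Hence every u in I reads X ++ c :: (shifted w_r) with v ↗ w_l <= X <= v ↖ w_l
   and 1 <= c <= n + 1.  If c = 1, u is X ∨ w_r, i.e. u lies in I2.  If c > 1,
   look at the root of the tree named u: it is the position k holding 1 after
   which all entries are >= k + 2.  It cannot lie in the block of v_r or of w_r
   (no entry 1 there), nor at the separator (c > 1), nor in the block of w_l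
   (then c >= k + 2 > n + 1); so it is at |v_l|, and every later entry is
   >= |v_l| + 2, which is exactly v_l ∨ (v_r ↗ w) <= u.  The lower bound of I1
   has separator |v_l| + 2 > 1, whence disjointness; the descriptions of I1 and
   I2 come from splitting a name at its root. *)

Lemma size_all2 (r : nat -> nat -> bool) s t : all2 r s t -> size s = size t.
Proof. by elim: s t => [|x s IH] [|y t] //= /andP[_ /IH ->]. Qed.

Lemma vleE s t : vle s t = all2 leq s t.
Proof. by rewrite /vle; case st: (all2 leq s t); rewrite ?andbF // (size_all2 st) eqxx. Qed.

Lemma all2_cat (r : nat -> nat -> bool) s1 s2 t1 t2 : size s1 = size t1 ->
  all2 r (s1 ++ s2) (t1 ++ t2) = all2 r s1 t1 && all2 r s2 t2.
Proof. by elim: s1 t1 => [|x s IH] [|y t] //= [/IH ->]; rewrite andbA. Qed.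

Lemma all2_leq_refl s : all2 leq s s.
Proof. by elim: s => //= x s ->; rewrite leqnn. Qed.

Lemma all2_leq_trans s t u : all2 leq s t -> all2 leq t u -> all2 leq s u.
Proof.
elim: s t u => [|x s IH] [|y t] [|z u] //= /andP[xy st] /andP[yz tu].
by rewrite (leq_trans xy yz) (IH _ _ st tu).
Qed.

Lemma all2_leq_anti s t : all2 leq s t -> all2 leq t s -> s = t.
Proof.
elim: s t => [|x s IH] [|y t] //= /andP[xy st] /andP[yx ts].
by rewrite (IH _ st ts) (@anti_leq x y) ?xy ?yx.
Qed.

Lemma all2_leq_all c s t : all2 leq s t -> all (leq c) s -> all (leq c) t.
Proof.
elim: s t => [|x s IH] [|y t] //= /andP[xy st] /andP[cx cs].
by rewrite (leq_trans cx xy) (IH _ st cs).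
Qed.

Lemma all2_leq_map (f g : nat -> nat) s : (forall z, f z <= g z) -> all2 leq (map f s) (map g s).
Proof. by move=> fg; elim: s => //= z s ->; rewrite fg. Qed.

Lemma all2_leq_catl s1 s2 u : all2 leq (s1 ++ s2) u ->
  exists u1 u2, [/\ u = u1 ++ u2, all2 leq s1 u1 & all2 leq s2 u2].
Proof.
move=> le_su; exists (take (size s1) u), (drop (size s1) u).
have size_u1 : size s1 = size (take (size s1) u).
  by rewrite size_takel // -(size_all2 le_su) size_cat leq_addr.
by move: le_su; rewrite -{1}(cat_take_drop (size s1) u) all2_cat // cat_take_drop => /andP[].
Qed.

Lemma all2_shift k s t : all2 leq (shift k s) (shift k t) = all2 leq s t.
Proof. by elim: s t => [|x s IH] [|y t] //=; rewrite leq_add2r IH. Qed.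

Lemma all_leq_shift c k s : all (leq c) s -> all (leq (c + k)) (shift k s).
Proof. by elim: s => //= y s IH /andP[cy cs]; rewrite leq_add2r cy IH. Qed.

Lemma shiftK k s : all (leq k) s -> shift k (map (subn^~ k) s) = s.
Proof. by elim: s => //= y s IH /andP[ky ks]; rewrite subnK ?IH. Qed.

Lemma drop_catl T n (s1 s2 : seq T) : n <= size s1 -> drop n (s1 ++ s2) = drop n s1 ++ s2.
Proof.
rewrite leq_eqVlt drop_cat => /orP[/eqP->|->] //.
by rewrite ltnn subnn drop0 drop_size.
Qed.

(* Every bound occurring in the theorem has this shape, the interval bounds
   differing only in the separator [c]. *)
Definition vjoin_at (c : nat) (X Y : seq nat) : seq nat := X ++ c :: shift (size X).+1 Y.

Lemma vjoinE X Y : vjoin X Y = vjoin_at 1 X Y.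
Proof. by []. Qed.

Lemma size_vjoin_at c X Y : size (vjoin_at c X Y) = size X + (size Y).+1.
Proof. by rewrite size_cat /= size_map. Qed.

Lemma size_vjoin X Y : size (vjoin X Y) = size X + (size Y).+1.
Proof. exact: size_vjoin_at. Qed.

Lemma all2_vjoin_at c c' X X' Y Y' : size X = size X' ->
  all2 leq (vjoin_at c X Y) (vjoin_at c' X' Y') = [&& all2 leq X X', c <= c' & all2 leq Y Y'].
Proof. by move=> sX; rewrite all2_cat //= sX all2_shift. Qed.

Lemma vjoin_at_between c1 c2 X1 X2 Y1 Y2 u : size X1 = size X2 ->
    all2 leq (vjoin_at c1 X1 Y1) u -> all2 leq u (vjoin_at c2 X2 Y2) ->
  exists c X Y, u = vjoin_at c X Y /\ size X = size X1.
Proof.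
move=> sX /all2_leq_catl[X [[|c Z] [-> X1X //= /andP[_ YZ]]]] _.
have /shiftK EZ : all (leq (size X).+1) Z.
  apply: (all2_leq_all YZ); rewrite -(size_all2 X1X) -[(size X1).+1]add0n.
  by apply: all_leq_shift; apply/allP.
by exists c, X, (map (subn^~ (size X).+1) Z); rewrite /vjoin_at EZ (size_all2 X1X).
Qed.

Lemma vjoin_vjoin_at c V X Y :
  vjoin V (vjoin_at c X Y) = vjoin_at (c + (size V).+1) (vjoin V X) Y.
Proof.
rewrite /vjoin_at /vjoin /shift map_cat -catA /= size_cat /= size_map -map_comp.
by congr (_ ++ _ :: _ ++ _ :: _); apply: eq_map => z /=; lia.
Qed.

Lemma size_nearrow v w : size (nearrow v w) = size v + size w.
Proof. by rewrite size_cat size_map. Qed.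

Lemma size_nwarrow v w : size (nwarrow v w) = size v + size w.
Proof. by rewrite size_cat size_map. Qed.

Lemma map_tri_shift n k s : 0 < k -> all (leq 1) s -> map (tri n) (shift k s) = shift (k + n) s.
Proof.
move=> k_gt0; elim: s => //= z s IH /andP[z_ge1 s_ge1].
by rewrite /tri ifN_eq ?IH ?addnA //; lia.
Qed.

Lemma nearrow_vjoin v A B : all (leq 1) B -> nearrow v (vjoin A B) = vjoin (nearrow v A) B.
Proof.
move=> B_ge1; rewrite /nearrow /vjoin map_cat /= map_tri_shift // size_nearrow -catA.
by rewrite /tri eqxx addSn addnC.
Qed.

Lemma nwarrow_vjoin v A B : nwarrow v (vjoin A B) = vjoin_at (size v).+1 (nwarrow v A) B.
Proof.
rewrite /nwarrow /vjoin /vjoin_at /shift map_cat -catA /= size_nwarrow add1n -map_comp.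
by congr (_ ++ _ ++ _ :: _); apply: eq_map => z /=; lia.
Qed.

Lemma nwarrow_vjoinl V R w : nwarrow (vjoin V R) w = vjoin V (nwarrow R w).
Proof.
rewrite /nwarrow /vjoin /shift map_cat -catA /= size_vjoin -map_comp.
by congr (_ ++ _ :: _ ++ _); apply: eq_map => z /=; lia.
Qed.

Lemma vjoin_nearrow_vjoin V R A B : all (leq 1) B ->
  vjoin V (nearrow R (vjoin A B)) = vjoin_at (size V).+2 (vjoin V (nearrow R A)) B.
Proof. by move=> B_ge1; rewrite nearrow_vjoin // [vjoin (nearrow R A) B]vjoinE vjoin_vjoin_at. Qed.

Lemma vjoin_nearrow V R A : vjoin V (nearrow R A) =
  vjoin V R ++ [seq if z == 1 then (size V).+2 else tri (size (vjoin V R)) z | z <- A].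
Proof.
rewrite /vjoin /nearrow /shift map_cat -catA /= -map_comp size_vjoin.
by congr (_ ++ _ :: _ ++ _); apply: eq_map => z /=; rewrite /tri; case: eqP => _; lia.
Qed.

Lemma vjoin_ge1 X Y : all (leq 1) X -> all (leq 1) Y -> all (leq 1) (vjoin X Y).
Proof.
move=> X_ge1 /(all_leq_shift (size X).+1) Y_ge1; rewrite all_cat X_ge1 /=.
by apply: sub_all Y_ge1 => z; apply: leq_trans.
Qed.

Lemma nearrow_ge1 X Y : all (leq 1) X -> all (leq 1) Y -> all (leq 1) (nearrow X Y).
Proof.
move=> X_ge1 /allP Y_ge1; rewrite all_cat X_ge1; apply/allP => _ /mapP[z /Y_ge1 z_ge1 ->].
by rewrite /tri; case: eqP => // _; rewrite addn_gt0 z_ge1.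
Qed.

Lemma name_ge1 t : all (leq 1) (name t).
Proof. by elim: t => //= l IHl r IHr; apply: vjoin_ge1. Qed.

Lemma size_name t : size (name t) = internal t.
Proof. by elim: t => //= l IHl r IHr; rewrite size_vjoin IHl IHr addnS. Qed.

Lemma vjoin_inj X X' Y Y' : size X = size X' -> vjoin X Y = vjoin X' Y' -> X = X' /\ Y = Y'.
Proof.
move=> sX /eqP; rewrite /vjoin eqseq_cat // => /andP[/eqP -> /eqP[]].
by move/(inj_map (@addIn _)).
Qed.

Definition root_at (s : seq nat) (k : nat) : bool :=
  (nth 0 s k == 1) && all (leq k.+2) (drop k.+1 s).

Lemma nth_vjoin_at_sep c X Y : nth 0 (vjoin_at c X Y) (size X) = c.
Proof. by rewrite nth_cat ltnn subnn. Qed.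

Lemma drop_vjoin_at_ge c X Y : all (leq 1) Y ->
  all (leq (size X).+2) (drop (size X).+1 (vjoin_at c X Y)).
Proof.
move=> /(all_leq_shift (size X).+1); rewrite add1n.
by rewrite drop_cat ltnNge leqnSn /= subSnn /= drop0.
Qed.

Lemma root_at_vjoin X Y : all (leq 1) Y -> root_at (vjoin X Y) (size X).
Proof. by move=> Y_ge1; rewrite /root_at nth_vjoin_at_sep eqxx drop_vjoin_at_ge. Qed.

Lemma nth_drop_ge m j s i : all (leq m) (drop j s) -> j <= i < size s -> m <= nth 0 s i.
Proof.
move=> /(all_nthP 0) drop_ge /andP[ji i_lt].
by rewrite -(subnKC ji) -nth_drop; apply: drop_ge; rewrite size_drop; lia.
Qed.

Lemma root_at_ge s k j : root_at s k -> k < j < size s -> k.+2 <= nth 0 s j.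
Proof. by case/andP=> _; apply: nth_drop_ge. Qed.

Lemma nth_eq1_size (s : seq nat) j : nth 0 s j = 1 -> j < size s.
Proof. by rewrite ltnNge; apply: contra_eqN => /(nth_default 0) ->. Qed.

Lemma root_at_last s k j : root_at s k -> nth 0 s j = 1 -> j <= k.
Proof.
move=> rk sj; rewrite leqNgt; apply/negP => kj.
by have := root_at_ge rk (introT andP (conj kj (nth_eq1_size sj))); rewrite sj.
Qed.

Lemma root_at_uniq s k p : root_at s k -> root_at s p -> k = p.
Proof.
move=> rk rp; apply/anti_leq/andP; split.
- by apply: (root_at_last rp); case/andP: rk => /eqP.
- by apply: (root_at_last rk); case/andP: rp => /eqP.
Qed.

Lemma root_at_name tl tr : root_at (name (Node tl tr)) (size (name tl)).
Proof. exact/root_at_vjoin/name_ge1. Qed.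

Lemma Nhat_size k u : Nhat k u -> size u = k.
Proof. by case=> t [<- <-]; rewrite size_name. Qed.

Lemma Nhat_name t : Nhat (size (name t)) (name t).
Proof. by exists t; rewrite size_name. Qed.

Lemma Nhat_vjoin i j X Y : Nhat i X -> Nhat j Y -> Nhat (i + j).+1 (vjoin X Y).
Proof. by case=> tl [<- <-] [tr [<- <-]]; exists (Node tl tr). Qed.

Lemma Nhat_vjoinK k X Y : all (leq 1) Y -> Nhat k (vjoin X Y) ->
  Nhat (size X) X /\ Nhat (size Y) Y.
Proof.
move=> Y_ge1 [[|tl tr] [_ E]].
  by move/(congr1 size): E; rewrite size_vjoin addnS.
have := root_at_vjoin X Y_ge1; rewrite -E => /(root_at_uniq (root_at_name tl tr)).
by case/vjoin_inj/(_ E) => <- <-; split; apply: Nhat_name.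
Qed.

Lemma Nhat_root k u : Nhat k u -> 0 < k -> exists r, root_at u r.
Proof. by case=> [[|tl tr] [<- <-]] //; exists (size (name tl)); apply: root_at_name. Qed.

Lemma root_at_vjoin_at_cat V R x c Y k : all (leq 1) R -> all (leq 1) Y ->
    1 < c <= (size (vjoin V R)).+1 ->
  root_at (vjoin_at c (vjoin V R ++ x) Y) k -> k = size V.
Proof.
set v := vjoin V R; set u := vjoin_at c (v ++ x) Y => R_ge1 Y_ge1 /andP[c_gt1 c_le] ru.
have uE i : i < size v -> nth 0 u i = nth 0 v i.
  by move=> iv; rewrite /u /vjoin_at -catA nth_cat iv.
have u_sep : nth 0 u (size (v ++ x)) = c := nth_vjoin_at_sep _ _ _.
have u_size : size (v ++ x) < size u by rewrite size_vjoin_at addnS ltnS leq_addr.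
have rv : root_at v (size V) := root_at_vjoin V R_ge1.
have /andP[/eqP uk _] := ru.
apply/anti_leq/andP; split; last first.
  apply: (root_at_last ru); rewrite uE; first by case/andP: rv => /eqP.
  by rewrite size_vjoin addnS ltnS leq_addr.
case: (ltngtP k (size (v ++ x))) => [kvx|vxk|kE].
- have := root_at_ge ru (introT andP (conj kvx u_size)); rewrite u_sep => kc.
  have kv : k < size v by rewrite -ltnS (leq_trans kc c_le).
  by apply: (root_at_last rv); rewrite -uE.
- have := nth_drop_ge (drop_vjoin_at_ge c _ Y_ge1) (introT andP (conj vxk (nth_eq1_size uk))).
  by rewrite -/u uk.
- by move: c_gt1; rewrite -u_sep -kE uk.
Qed.

Lemma size_vjoin_nearrow V R A : size (vjoin V (nearrow R A)) = size (nearrow (vjoin V R) A).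
Proof. by rewrite !size_vjoin !size_nearrow size_vjoin; lia. Qed.

Lemma nearrow_le_vjoin_nearrow V R A :
  all2 leq (nearrow (vjoin V R) A) (vjoin V (nearrow R A)).
Proof.
rewrite vjoin_nearrow /nearrow all2_cat // all2_leq_refl all2_leq_map // => z.
by rewrite /tri; case: eqP.
Qed.

Lemma all2_leq_map_tri_if m n A x : all2 leq (map (tri n) A) x -> all (leq m) x ->
  all2 leq [seq if z == 1 then m else tri n z | z <- A] x.
Proof.
elim: A x => [|z A IH] [|y x] //= /andP[zy le_x] /andP[my m_x].
by rewrite IH // andbT; case: eqP.
Qed.

Lemma vjoin_nearrow_le_tree V R A x c Y k : all (leq 1) R -> all (leq 1) Y ->
    Nhat k (vjoin_at c (vjoin V R ++ x) Y) -> 1 < c <= (size (vjoin V R)).+1 ->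
    all2 leq (nearrow (vjoin V R) A) (vjoin V R ++ x) ->
  all2 leq (vjoin_at (size V).+2 (vjoin V (nearrow R A)) Y) (vjoin_at c (vjoin V R ++ x) Y).
Proof.
move=> R_ge1 Y_ge1 Nu c_bounds le_x.
have [r ru] : exists r, root_at (vjoin_at c (vjoin V R ++ x) Y) r.
  by apply: (Nhat_root Nu); rewrite -(Nhat_size Nu) size_vjoin_at addnS.
have rV := root_at_vjoin_at_cat R_ge1 Y_ge1 c_bounds ru; subst r.
have [x_ge c_ge] : all (leq (size V).+2) x /\ (size V).+2 <= c.
  case/andP: ru => _; rewrite /vjoin_at -catA drop_catl; last first.
    by rewrite size_vjoin addnS ltnS leq_addr.
  by rewrite all_cat => /andP[_]; rewrite all_cat /= => /and3P[-> -> _].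
rewrite all2_vjoin_at ?c_ge ?all2_leq_refl ?andbT; last first.
  by rewrite -(size_all2 le_x) size_vjoin_nearrow.
rewrite vjoin_nearrow all2_cat // all2_leq_refl /=; apply: all2_leq_map_tri_if x_ge.
by move: le_x; rewrite /nearrow all2_cat // all2_leq_refl.
Qed.

Lemma tinterval_vjoinl V L U j u : Nhat (size V) V -> all (leq 1) L ->
  tinterval (size V + j.+1) (vjoin V L) (vjoin V U) u <->
  exists t, tinterval j L U t /\ u = vjoin V t.
Proof.
move=> NV L_ge1; rewrite /tinterval !vleE; split.
- case=> Nu [Lu uU]; have [c [X [Y [uE sX]]]] := vjoin_at_between (erefl (size V)) Lu uU.
  move: Lu uU Nu; rewrite uE !all2_vjoin_at // => /and3P[VX c_ge LY] /and3P[XV c_le YU].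
  rewrite -(all2_leq_anti VX XV) (@anti_leq c 1) ?c_le // -vjoinE => Nu.
  have [_ NY] := Nhat_vjoinK (all2_leq_all LY L_ge1) Nu.
  move/Nhat_size: Nu; rewrite size_vjoin => /addnI[sY].
  by exists Y; rewrite -sY !vleE.
- case=> t [[Nt]]; rewrite !vleE => -[Lt tU] ->.
  split; first by rewrite addnS; apply: Nhat_vjoin.
  by rewrite !vjoinE !all2_vjoin_at // all2_leq_refl Lt tU.
Qed.

Lemma tinterval_vjoinr L U B i u : Nhat (size B) B -> all (leq 1) B -> size L = size U ->
  tinterval (i + (size B).+1) (vjoin L B) (vjoin U B) u <->
  exists s, tinterval i L U s /\ u = vjoin s B.
Proof.
move=> NB B_ge1 sLU; rewrite /tinterval !vleE; split.
- case=> Nu [Lu uU]; have [c [X [Y [uE sX]]]] := vjoin_at_between sLU Lu uU.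
  move: Lu uU Nu; rewrite uE !all2_vjoin_at ?sX // => /and3P[LX c_ge BY] /and3P[XU c_le YB].
  rewrite -(all2_leq_anti BY YB) (@anti_leq c 1) ?c_le // -vjoinE => Nu.
  have [NX _] := Nhat_vjoinK B_ge1 Nu.
  move/Nhat_size: Nu; rewrite size_vjoin => /addIn sX'.
  by exists X; rewrite -sX' !vleE.
- case=> s [[Ns]]; rewrite !vleE => -[Ls sU] ->.
  have sL := size_all2 Ls.
  split; first by rewrite addnS; apply: Nhat_vjoin.
  by rewrite !vjoinE !all2_vjoin_at -?sL ?(size_all2 sU) // all2_leq_refl Ls sU.
Qed.

Lemma tinterval_nearrow_split V R A B k u : all (leq 1) R -> all (leq 1) B ->
  let v := vjoin V R in
  tinterval k (nearrow v (vjoin A B)) (nwarrow v (vjoin A B)) u <->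
  tinterval k (vjoin V (nearrow R (vjoin A B))) (nwarrow v (vjoin A B)) u \/
  tinterval k (nearrow v (vjoin A B)) (vjoin (nwarrow v A) B) u.
Proof.
move=> R_ge1 B_ge1 v; have sA : size (nearrow v A) = size (nwarrow v A).
  by rewrite size_nearrow size_nwarrow.
rewrite /tinterval !vleE nearrow_vjoin // nwarrow_vjoin vjoin_nearrow_vjoin //.
rewrite [vjoin (nearrow v A) B]vjoinE [vjoin (nwarrow v A) B]vjoinE.
split.
- case=> Nu [lo hi]; have [c [X [Y [uE sX]]]] := vjoin_at_between sA lo hi.
  rewrite uE in Nu lo hi *; rewrite !all2_vjoin_at ?sX // in lo hi.
  case/and3P: lo => lo c_ge BY; case/and3P: hi => hi c_le YB.
  rewrite -(all2_leq_anti BY YB) in Nu *; case: (leqP c 1) => [c_le1 | c_gt1].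
    right; rewrite (@anti_leq c 1) ?c_le1 // in Nu *.
    by rewrite !all2_vjoin_at ?sX // lo hi !all2_leq_refl.
  left; split=> //; split; last by rewrite all2_vjoin_at ?sX // hi c_le all2_leq_refl.
  have [X1 [x [XE vX1 le_x]]] := all2_leq_catl lo.
  have sX1 : size X1 = size v by rewrite -(size_all2 vX1).
  move: hi; rewrite XE /nwarrow all2_cat // => /andP[X1v _].
  rewrite XE -(all2_leq_anti vX1 X1v) in Nu *.
  apply: vjoin_nearrow_le_tree R_ge1 B_ge1 Nu _ _; first by rewrite c_gt1 c_le.
  by rewrite /nearrow all2_cat // all2_leq_refl le_x.
- case=> -[Nu [lo hi]]; split=> //; split=> //.
  + apply: all2_leq_trans lo; rewrite all2_vjoin_at ?size_vjoin_nearrow //.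
    by rewrite nearrow_le_vjoin_nearrow all2_leq_refl.
  + by apply: (all2_leq_trans hi); rewrite all2_vjoin_at // !all2_leq_refl.
Qed.

Lemma tinterval_nearrow_disjoint V R A B k u : all (leq 1) B ->
  let v := vjoin V R in
  ~ (tinterval k (vjoin V (nearrow R (vjoin A B))) (nwarrow v (vjoin A B)) u /\
     tinterval k (nearrow v (vjoin A B)) (vjoin (nwarrow v A) B) u).
Proof.
move=> B_ge1 v [[_ [+ _]] [_ [_ +]]]; rewrite !vleE => lo /(all2_leq_trans lo).
rewrite vjoin_nearrow_vjoin // vjoinE all2_vjoin_at; first by case/and3P.
by rewrite size_vjoin_nearrow size_nearrow size_nwarrow.
Qed.

Theorem mainTheorem11 (vl vr wl wr : tree) :
  let v := name (Node vl vr) in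
  let w := name (Node wl wr) in
  let n := size v in
  let m := size w in
  let I  := tinterval (n + m) (nearrow v w) (nwarrow v w) in
  let I1 := tinterval (n + m) (vjoin (name vl) (nearrow (name vr) w)) (nwarrow v w) in
  let I2 := tinterval (n + m) (nearrow v w) (vjoin (nwarrow v (name wl)) (name wr)) in
  (forall u, I u <-> I1 u \/ I2 u) /\
  (forall u, ~ (I1 u /\ I2 u)) /\
  (forall u, I1 u <->
     exists t, tinterval (size (name vr) + m) (nearrow (name vr) w) (nwarrow (name vr) w) t
               /\ u = vjoin (name vl) t) /\
  (forall u, I2 u <->
     exists s, tinterval (n + size (name wl)) (nearrow v (name wl)) (nwarrow v (name wl)) s
               /\ u = vjoin s (name wr)).
Proof.
move=> v w n m I I1 I2; rewrite {}/I {}/I1 {}/I2 {}/n {}/m {}/v {}/w /=.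
have R_ge1 := name_ge1 vr; have B_ge1 := name_ge1 wr; have w_ge1 := name_ge1 (Node wl wr).
set V := name vl; set R := name vr; set A := name wl; set B := name wr in R_ge1 B_ge1 w_ge1 *.
split; [|split; [|split]] => u.
- exact: tinterval_nearrow_split.
- exact: tinterval_nearrow_disjoint.
- have -> : size (vjoin V R) + size (vjoin A B) = size V + (size R + size (vjoin A B)).+1.
    by rewrite size_vjoin -addnA addSn.
  rewrite nwarrow_vjoinl; apply: tinterval_vjoinl; first exact: Nhat_name.
  exact: nearrow_ge1.
- have -> : size (vjoin V R) + size (vjoin A B) = size (vjoin V R) + size A + (size B).+1.
    by rewrite [size (vjoin A B)]size_vjoin addnA.
  rewrite nearrow_vjoin //; apply: tinterval_vjoinr => //; first exact: Nhat_name.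
  by rewrite size_nearrow size_nwarrow.
Qed.
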